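(* Let $D$ be any derivation of $\mathfrak{g}_1\underline{\times}\mathfrak{g}_2$, and write $D_{ij}=p_iDp_j$. Then: (1) for $i=1,2$, the restriction of $D_{ii}$ to $\mathfrak{g}_i$ is a derivation of $\mathfrak{g}_i$; (2) $D_{21}(C^1\mathfrak{g}_1)=D_{12}(C^1\mathfrak{g}_2)=0$; (3) $D_{i3}(\mathfrak{g}_3)\subset Z(\mathfrak{g}_i)$ for $i=1,2$; (4) $D_{12}(\mathfrak{g}_2)\subset T_1$ and $D_{21}(\mathfrak{g}_1)\subset T_2$, where $T_i=\{Y\in\mathfrak{g}_i : [Y,\mathfrak{g}_i]\subset Z(\mathfrak{g}_i)\}$ for $i=1,2$.
   Context: All Lie algebras are finite-dimensional, complex, nilpotent and nonabelian. $C^1\mathfrak{g}=[\mathfrak{g},\mathfrak{g}]$; $Z(\mathfrak{g})$ is the center. Product by generators: for $\mathfrak{g}_1,\mathfrak{g}_2$ of dimensions $m_1,m_2$ take bases $\{X_1,\dots,X_{m_1}\}$, $\{X'_1,\dots,X'_{m_2}\}$ such that $X_1,\dots,X_{n_1}$ generate $\mathfrak{g}_1$ and $X_{n_1+1},\dots,X_{m_1}$ span $C^1\mathfrak{g}_1$, and similarly for $\mathfrak{g}_2$ with $n_2$ generators. $\mathfrak{g}_1\underline{\times}\mathfrak{g}_2$ is the Lie algebra on $\mathfrak{g}_1\oplus\mathfrak{g}_2\oplus\mathfrak{g}_3$, $\mathfrak{g}_3=\langle Z_1,\dots,Z_{n_1n_2}\rangle$, with the brackets of $\mathfrak{g}_1$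 and of $\mathfrak{g}_2$, $[X_i,X'_j]=Z_{(i-1)n_2+j}$ for $i\le n_1$, $j\le n_2$, $[X_i,X'_j]=0$ otherwise, and $\mathfrak{g}_3$ central. $p_i$ ($i=1,2,3$) is the projection of $\mathfrak{g}_1\oplus\mathfrak{g}_2\oplus\mathfrak{g}_3$ onto $\mathfrak{g}_i$. *)

From mathcomp Require Import all_boot all_algebra.
From mathcomp Require Import complex Rstruct.
Set Implicit Arguments. Unset Strict Implicit. Unset Printing Implicit Defensive.
Import GRing.Theory.
Local Open Scope ring_scope.

Definition Cplx : fieldType := complex Rdefinitions.R.

Section LieDefs.
Variables (F : fieldType) (V : lmodType F).
Implicit Types (br : V -> V -> V) (x y z : V).

Definition bilinear_br br :=
  forall (a : F) x y z,
    br (a *: x + y) z = a *: br x z + br y z /\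
    br z (a *: x + y) = a *: br z x + br z y.

Definition lie_bracket br :=
  [/\ bilinear_br br,
      (forall x, br x x = 0) &
      (forall x y z, br x (br y z) + br y (br z x) + br z (br x y) = 0)].

Definition nilpotent_br br :=
  exists N : nat, forall x (s : seq V), size s = N -> foldl br x s = 0.

Definition nonabelian_br br := exists x y, br x y != 0.

Definition derived br (x : V) : Prop :=
  exists s : seq (V * V), x = \sum_(p <- s) br p.1 p.2.

Definition center br (z : V) : Prop := forall x, br z x = 0.

Definition Tset br (y : V) : Prop := forall x, center br (br y x).

Definition linear_map (d : V -> V) :=
  forall (a : F) x y, d (a *: x + y) = a *: d x + d y.

Definition derivation br (d : V -> V) :=
  linear_map d /\ forall x y, d (br x y) = br (d x) y + br x (d y).

Definition subalgebra br (S : V -> Prop) :=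
  [/\ S 0, (forall (a : F) x y, S x -> S y -> S (a *: x + y)) &
      (forall x y, S x -> S y -> S (br x y))].

Definition generates br (P : V -> Prop) :=
  forall S, subalgebra br S -> (forall x, P x -> S x) -> forall x, S x.

End LieDefs.

(* For a bracket on F^m (row vectors), the standard basis e_0,...,e_{m-1}
   is adapted: e_0..e_{n-1} generate, and e_n..e_{m-1} span C^1 g. *)
Definition adapted_basis (F : fieldType) (m n : nat)
    (br : 'rV[F]_m -> 'rV[F]_m -> 'rV[F]_m) :=
  [/\ (n <= m)%N,
      generates br (fun x => exists i : 'I_m, (i < n)%N /\ x = delta_mx 0 i) &
      (forall x, derived br x <-> forall i : 'I_m, (i < n)%N -> x 0 i = 0)].

(* i-th coordinate of a row vector (0 if out of range) *)
Definition coord (F : fieldType) (m : nat) (v : 'rV[F]_m) (i : nat) : F :=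
  if (insub i : option 'I_m) is Some j then v 0 j else 0.

(* Product by generators g1 x_ g2 on g1 (+) g2 (+) g3, g3 = F^(n1*n2);
   0-indexed: [X_i, X'_j] = Z_(i*n2+j) for i < n1, j < n2. *)
Definition prod_space (F : fieldType) (m1 m2 k : nat) :=
  ('rV[F]_m1 * 'rV[F]_m2 * 'rV[F]_k)%type.

Definition prod_bracket (F : fieldType) (m1 m2 n1 n2 : nat)
    (br1 : 'rV[F]_m1 -> 'rV[F]_m1 -> 'rV[F]_m1)
    (br2 : 'rV[F]_m2 -> 'rV[F]_m2 -> 'rV[F]_m2)
    (x y : prod_space F m1 m2 (n1 * n2)) : prod_space F m1 m2 (n1 * n2) :=
  (br1 x.1.1 y.1.1, br2 x.1.2 y.1.2,
   \row_(k < n1 * n2)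
     (coord x.1.1 (k %/ n2) * coord y.1.2 (k %% n2)
      - coord y.1.1 (k %/ n2) * coord x.1.2 (k %% n2))).

From Pilot Require Import Defs.
From mathcomp Require Import all_boot all_algebra.
From mathcomp Require Import complex Rstruct.
Local Open Scope ring_scope.
Import GRing.Theory.

Set Implicit Arguments.
Unset Strict Implicit.
Unset Printing Implicit Defensive.

(* Every item is a component of the Leibniz rule D[x, y] = [Dx, y] + [x, Dy]
   applied to a well-chosen pair: brackets inside g_i stay in g_i, cross
   brackets land in g_3, g_3 is central, and a derivation maps central
   elements to central elements. *)

Section Bilinear.
Variables (F : fieldType) (V : lmodType F) (br : V -> V -> V).
Hypothesis br_bilin : bilinear_br br.

Lemma bilin0l z : br 0 z = 0.
Proof.
have [+ _] := br_bilin 1 0 0 z; rewrite !scale1r addr0 => brD.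
by apply: (addrI (br 0 z)); rewrite addr0 -brD.
Qed.

Lemma bilin0r z : br z 0 = 0.
Proof.
have [_ +] := br_bilin 1 0 0 z; rewrite !scale1r addr0 => brD.
by apply: (addrI (br z 0)); rewrite addr0 -brD.
Qed.

End Bilinear.

Section LinearMap.
Variables (F : fieldType) (V : lmodType F) (d : V -> V).
Hypothesis d_lin : linear_map d.

Lemma linear_map0 : d 0 = 0.
Proof.
have := d_lin 1 0 0; rewrite !scale1r addr0 => dD.
by apply: (addrI (d 0)); rewrite addr0 -dD.
Qed.

Lemma linear_mapD x y : d (x + y) = d x + d y.
Proof. by have := d_lin 1 x y; rewrite !scale1r. Qed.

End LinearMap.

Lemma derived_ind (F : fieldType) (V : lmodType F) (br : V -> V -> V)
    (P : V -> Prop) :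
  P 0 -> (forall x y, P x -> P y -> P (x + y)) -> (forall x y, P (br x y)) ->
  forall x, derived br x -> P x.
Proof.
move=> P0 PD Pbr _ [s ->]; elim: s => [|p s IHs]; first by rewrite big_nil.
by rewrite big_cons; apply: PD.
Qed.

Lemma derivation_center (F : fieldType) (V : lmodType F) (br : V -> V -> V)
    (d : V -> V) z :
  derivation br d -> center br z -> center br (d z).
Proof.
move=> [d_lin d_leib] zZ x.
by have := d_leib z x; rewrite !zZ linear_map0 // addr0.
Qed.

Lemma coord0 (F : fieldType) m i : Defs.coord (0 : 'rV[F]_m) i = 0.
Proof. by rewrite /Defs.coord; case: insub => // j; rewrite mxE. Qed.

Section ProductByGenerators.
Variables (F : fieldType) (m1 m2 n1 n2 : nat).
Variables (br1 : 'rV[F]_m1 -> 'rV[F]_m1 -> 'rV[F]_m1)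
          (br2 : 'rV[F]_m2 -> 'rV[F]_m2 -> 'rV[F]_m2).
Hypotheses (br1_bilin : bilinear_br br1) (br2_bilin : bilinear_br br2).

Local Notation W := (prod_space F m1 m2 (n1 * n2)).
Local Notation pbr := (prod_bracket (n1:=n1) (n2:=n2) br1 br2).

Lemma g1_linear c a a' : ((c *: a + a', 0, 0) : W) = c *: (a, 0, 0) + (a', 0, 0).
Proof. by rewrite -[RHS]/(c *: a + a', c *: 0 + 0, c *: 0 + 0) !scaler0 !addr0. Qed.

Lemma g2_linear c b b' : ((0, c *: b + b', 0) : W) = c *: (0, b, 0) + (0, b', 0).
Proof. by rewrite -[RHS]/(c *: 0 + 0, c *: b + b', c *: 0 + 0) !scaler0 !addr0. Qed.

Lemma prod_bracket11 a a' : pbr (a, 0, 0) (a', 0, 0) = (br1 a a', 0, 0).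
Proof.
rewrite /prod_bracket /= bilin0l //; congr (_, _, _).
by apply/rowP => k; rewrite !mxE !coord0 !mulr0 subrr.
Qed.

Lemma prod_bracket22 b b' : pbr (0, b, 0) (0, b', 0) = (0, br2 b b', 0).
Proof.
rewrite /prod_bracket /= bilin0l //; congr (_, _, _).
by apply/rowP => k; rewrite !mxE !coord0 !mul0r subrr.
Qed.

Lemma prod_bracket12 a b : (pbr (a, 0, 0) (0, b, 0)).1 = 0.
Proof. by rewrite /= bilin0l // bilin0r. Qed.

Lemma prod_bracket21 a b : (pbr (0, b, 0) (a, 0, 0)).1 = 0.
Proof. by rewrite /= bilin0l // bilin0r. Qed.

Lemma prod_center_g3 w : w.1 = 0 -> center pbr w.
Proof.
case: w => [[a b] z] [-> ->] x; rewrite /prod_bracket /= !bilin0l //.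
by congr (_, _, _); apply/rowP => k; rewrite !mxE !coord0 !mulr0 !mul0r subrr.
Qed.

Lemma prod_center1 w : center pbr w -> center br1 w.1.1.
Proof. by move=> wZ x; have := congr1 (fun p => p.1.1) (wZ (x, 0, 0)). Qed.

Lemma prod_center2 w : center pbr w -> center br2 w.1.2.
Proof. by move=> wZ x; have := congr1 (fun p => p.1.2) (wZ (0, x, 0)). Qed.

Variable D : W -> W.
Hypothesis D_der : derivation pbr D.

Let D_lin : linear_map D. Proof. by case: D_der. Qed.
Let D_leib x y : D (pbr x y) = pbr (D x) y + pbr x (D y).
Proof. by case: D_der. Qed.

Lemma derivation_D11 : derivation br1 (fun a => (D (a, 0, 0)).1.1).
Proof.
split=> [c a a' | a a'] /=; first by rewrite g1_linear D_lin.
by have := congr1 (fun p => p.1.1) (D_leib (a, 0, 0) (a', 0, 0)); rewrite prod_bracket11.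
Qed.

Lemma derivation_D22 : derivation br2 (fun b => (D (0, b, 0)).1.2).
Proof.
split=> [c b b' | b b'] /=; first by rewrite g2_linear D_lin.
by have := congr1 (fun p => p.1.2) (D_leib (0, b, 0) (0, b', 0)); rewrite prod_bracket22.
Qed.

Lemma D21_derived0 a : derived br1 a -> (D (a, 0, 0)).1.2 = 0.
Proof.
apply: (@derived_ind _ _ br1 (fun a => (D (a, 0, 0)).1.2 = 0)) => [|x y Dx Dy | x y].
- by rewrite -[(0, 0, 0)]/(0 : W) linear_map0.
- have := g1_linear 1 x y; rewrite !scale1r => ->; rewrite linear_mapD //= Dx Dy; exact: add0r.
have := congr1 (fun p => p.1.2) (D_leib (x, 0, 0) (y, 0, 0)).
by rewrite prod_bracket11 /= (bilin0l br2_bilin) (bilin0r br2_bilin) addr0.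
Qed.

Lemma D12_derived0 b : derived br2 b -> (D (0, b, 0)).1.1 = 0.
Proof.
apply: (@derived_ind _ _ br2 (fun b => (D (0, b, 0)).1.1 = 0)) => [|x y Dx Dy | x y].
- by rewrite -[(0, 0, 0)]/(0 : W) linear_map0.
- have := g2_linear 1 x y; rewrite !scale1r => ->; rewrite linear_mapD //= Dx Dy; exact: add0r.
have := congr1 (fun p => p.1.1) (D_leib (0, x, 0) (0, y, 0)).
by rewrite prod_bracket22 /= (bilin0l br1_bilin) (bilin0r br1_bilin) addr0.
Qed.

Lemma D_g3_center z : center pbr (D (0, 0, z)).
Proof. exact/(derivation_center D_der)/prod_center_g3. Qed.

Lemma D12_Tset b : Tset br1 (D (0, b, 0)).1.1.
Proof.
move=> x; have := prod_center1 (derivation_center D_der (prod_center_g3 (prod_bracket21 x b))).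
by rewrite D_leib /= (bilin0l br1_bilin) addr0.
Qed.

Lemma D21_Tset a : Tset br2 (D (a, 0, 0)).1.2.
Proof.
move=> x; have := prod_center2 (derivation_center D_der (prod_center_g3 (prod_bracket12 a x))).
by rewrite D_leib /= (bilin0l br2_bilin) addr0.
Qed.

End ProductByGenerators.

Theorem mainTheorem9 (m1 n1 m2 n2 : nat)
  (br1 : 'rV[Cplx]_m1 -> 'rV[Cplx]_m1 -> 'rV[Cplx]_m1)
  (br2 : 'rV[Cplx]_m2 -> 'rV[Cplx]_m2 -> 'rV[Cplx]_m2)
  (L1 : lie_bracket br1) (N1 : nilpotent_br br1) (A1 : nonabelian_br br1)
  (B1 : adapted_basis n1 br1)
  (L2 : lie_bracket br2) (N2 : nilpotent_br br2) (A2 : nonabelian_br br2)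
  (B2 : adapted_basis n2 br2)
  (D : prod_space Cplx m1 m2 (n1 * n2) -> prod_space Cplx m1 m2 (n1 * n2))
  (HD : derivation (prod_bracket (n1:=n1) (n2:=n2) br1 br2) D) :
  (* (1) *)
  (derivation br1 (fun a => (D (a, 0, 0)).1.1) /\
   derivation br2 (fun b => (D (0, b, 0)).1.2)) /\
  (* (2) *)
  ((forall a, derived br1 a -> (D (a, 0, 0)).1.2 = 0) /\
   (forall b, derived br2 b -> (D (0, b, 0)).1.1 = 0)) /\
  (* (3) *)
  (forall z : 'rV[Cplx]_(n1 * n2),
     center br1 (D (0, 0, z)).1.1 /\ center br2 (D (0, 0, z)).1.2) /\
  (* (4) *)
  ((forall b, Tset br1 (D (0, b, 0)).1.1) /\
   (forall a, Tset br2 (D (a, 0, 0)).1.2)).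
Proof.
have [[br1_bilin _ _] [br2_bilin _ _]] := (L1, L2).
split; [split | split; [split | split; [move=> z; split | split]]].
- exact: derivation_D11.
- exact: derivation_D22.
- exact: D21_derived0.
- exact: D12_derived0.
- exact: prod_center1 (D_g3_center br1_bilin br2_bilin HD z).
- exact: prod_center2 (D_g3_center br1_bilin br2_bilin HD z).
- exact: D12_Tset.
- exact: D21_Tset.
Qed.
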